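(* Let $\pi:L_{\mathcal F}\to L_{\mathcal G}$ satisfy (REG). For each $X\in L_{\mathcal F}$ and $Q\in L^*_{\mathcal F}\cap\mathcal P$, \[\inf_\Gamma K^\Gamma(X,Q)=K(X,Q),\] where the infimum is taken over all finite partitions $\Gamma$ of $\Omega$ into $\mathcal G$-measurable sets.
   Context: Let $(\Omega,\mathcal F,\mathbb P)$ be a probability space and $\mathcal G\subseteq\mathcal F$ a sub-$\sigma$-algebra. (In)equalities hold $\mathbb P$-a.s. unless a measure is indicated ($\ge_Q$: $Q$-a.s.); $\inf$ is the $\mathbb P$-essential infimum. $L_{\mathcal F}\subseteq L^0(\Omega,\mathcal F,\mathbb P)$, $L_{\mathcal G}\subseteq L^0(\Omega,\mathcal G,\mathbb P)$ are vector lattices closed under multiplication by indicators of $\mathcal F$- (resp. $\mathcal G$-) measurable sets; the order continuous dual $L^*_{\mathcal F}$ of $(L_{\mathcal F},\ge)$ is a lattice contained in $L^1(\Omega,\mathcal F,\mathbb P)$ (functionals $X\mapsto E_{\mathbb P}[ZX]$), closed under multiplication by indicators of sets in $\mathcal F$. $\mathcal P$ = densities of probabilities $Q\ll\mathbb P$. (REG): $\pi(X\mathbf 1_A+Y\mathbf 1_{A^c})=\pi(X)\mathbf 1_A+\pi(Y)\mathbf 1_{A^c}$ for $A\in\mathcal G$. $K(X,Q):=\inf_{\xi\in L_{\mathcal F}}\{\pi(\xi)\mid E_Q[\xi\mid\mathcal G]\ge_Q E_Q[X\mid\mathcal G]\}$. For $A\in\mathcal G$, $\pi_A(X):=\operatorname{ess\,sup}_{\omega\in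 A}\pi(X)(\omega)$; for a finite $\mathcal G$-measurable partition $\Gamma$, $\pi^\Gamma(X):=\sum_{A\in\Gamma}\pi_A(X)\mathbf 1_A$ and $K^\Gamma(X,Q):=\inf_{\xi\in L_{\mathcal F}}\{\pi^\Gamma(\xi)\mid E_Q[\xi\mid\mathcal G]\ge_Q E_Q[X\mid\mathcal G]\}$. *)

From HB Require Import structures.
From mathcomp Require Import all_boot all_order all_algebra.
From mathcomp Require Import all_classical all_reals all_analysis measurable_realfun.

Set Implicit Arguments.
Unset Strict Implicit.
Unset Printing Implicit Defensive.

Import Order.TTheory GRing.Theory Num.Theory.
Import numFieldNormedType.Exports.

Local Open Scope classical_set_scope.
Local Open Scope ring_scope.

Section Defs.
Context d (T : measurableType d) (R : realType) (P : probability T R).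

Definition meas_wrt (M : set (set T)) (f : T -> R) :=
  forall B : set R, measurable B -> M (f @^-1` B).

Definition is_sub_sigma_algebra (G : set (set T)) :=
  sigma_algebra setT G /\ G `<=` measurable.

(** [L] (a set of M-measurable functions, saturated under P-a.s. equality
    among M-measurable functions, i.e. a set of classes of L^0(Omega,M,P))
    is a vector lattice closed under multiplication by indicators of sets
    in [M]. *)
Definition ind_vector_lattice (M : set (set T)) (L : set (T -> R)) :=
  (forall X, L X -> meas_wrt M X) /\
  (forall X Y, L X -> meas_wrt M Y -> {ae P, forall x, X x = Y x} -> L Y) /\
  L (fun _ => 0) /\
  (forall X Y, L X -> L Y -> L (fun x => X x + Y x)) /\
  (forall (a : R) X, L X -> L (fun x => a * X x)) /\
  (forall X Y, L X -> L Y -> L (fun x => Num.max (X x) (Y x))) /\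
  (forall A X, M A -> L X -> L (fun x => \1_A x * X x)).

(** [Z] is the density dQ/dP of a probability measure Q << P. *)
Definition is_density (Z : T -> R) :=
  [/\ measurable_fun setT Z, {ae P, forall x, 0 <= Z x} &
      (\int[P]_x (Z x)%:E = 1)%E].

(** [Z] belongs to (the L^1 representation of) the order continuous dual of
    (L_F, >=): the functional X |-> E_P[Z X] is well defined on L_F and
    order continuous (for every downward directed D in L_F with
    infimum 0 in L_F, the net (E_P[Z X])_{X in D} converges to 0). *)
Definition oc_dual (LF : set (T -> R)) (Z : T -> R) :=
  [/\ P.-integrable setT (fun x => (Z x)%:E),
      (forall X, LF X -> P.-integrable setT (fun x => (Z x * X x)%:E)) &
      (forall D : set (T -> R), D `<=` LF -> D !=set0 ->
        (forall X Y, D X -> D Y -> exists2 W, D W &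
           {ae P, forall x, W x <= X x /\ W x <= Y x}) ->
        (forall X, D X -> {ae P, forall x, 0 <= X x}) ->
        (forall h, LF h -> (forall X, D X -> {ae P, forall x, h x <= X x}) ->
           {ae P, forall x, h x <= 0}) ->
        forall eps : R, 0 < eps -> exists2 X0, D X0 &
          forall X, D X -> {ae P, forall x, X x <= X0 x} ->
            (`| \int[P]_x (Z x * X x)%:E | < eps%:E)%E)].

(** Q-almost surely, where Z = dQ/dP. *)
Definition Qae (Z : T -> R) (p : T -> Prop) := {ae P, forall x, 0 < Z x -> p x}.

(** [Y] is a version of E_Q[xi | G], Z = dQ/dP. *)
Definition cond_exp_version (G : set (set T)) (Z xi Y : T -> R) :=
  [/\ meas_wrt G Y,
      P.-integrable setT (fun x => (Y x * Z x)%:E) &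
      forall A, G A ->
        (\int[P]_(x in A) (Y x * Z x)%:E = \int[P]_(x in A) (xi x * Z x)%:E)%E].

Definition cond_exp_ge (G : set (set T)) (Z xi X : T -> R) :=
  exists Yxi YX, [/\ cond_exp_version G Z xi Yxi, cond_exp_version G Z X YX &
                     Qae Z (fun x => YX x <= Yxi x)].

Definition is_essinf (S : set (T -> \bar R)) (Y : T -> \bar R) :=
  [/\ measurable_fun setT Y,
      (forall f, S f -> {ae P, forall x, (Y x <= f x)%E}) &
      (forall Y', measurable_fun setT Y' ->
         (forall f, S f -> {ae P, forall x, (Y' x <= f x)%E}) ->
         {ae P, forall x, (Y' x <= Y x)%E})].

Definition esssup_on (A : set T) (f : T -> \bar R) : \bar R :=
  ereal_inf [set c : \bar R | {ae P, forall x, A x -> (f x <= c)%E}].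

Definition G_partition (G : set (set T)) (Gam : seq (set T)) :=
  [/\ forall i, (i < size Gam)%N -> G (nth set0 Gam i),
      forall i j, (i < size Gam)%N -> (j < size Gam)%N -> i != j ->
        nth set0 Gam i `&` nth set0 Gam j = set0 &
      forall x, exists2 i, (i < size Gam)%N & nth set0 Gam i x].

Definition pi_Gamma (pi : (T -> R) -> T -> R) (Gam : seq (set T)) (xi : T -> R)
  : T -> \bar R :=
  fun x => (\sum_(A <- Gam) esssup_on A (fun y => (pi xi y)%:E) * (\1_A x)%:E)%E.

Definition K_family (G : set (set T)) (LF : set (T -> R))
  (pi : (T -> R) -> T -> R) (X Z : T -> R) : set (T -> \bar R) :=
  [set f | exists2 xi, LF xi /\ cond_exp_ge G Z xi X &
                       f = (fun x => (pi xi x)%:E)].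

Definition KGamma_family (G : set (set T)) (LF : set (T -> R))
  (pi : (T -> R) -> T -> R) (Gam : seq (set T)) (X Z : T -> R)
  : set (T -> \bar R) :=
  [set f | exists2 xi, LF xi /\ cond_exp_ge G Z xi X & f = pi_Gamma pi Gam xi].

End Defs.

From HB Require Import structures.
From mathcomp Require Import all_boot all_order all_algebra.
From mathcomp Require Import all_classical all_reals all_analysis measurable_realfun.
From mathcomp Require Import ess_sup_inf.

Set Implicit Arguments.
Unset Strict Implicit.
Unset Printing Implicit Defensive.

Import Order.TTheory GRing.Theory Num.Theory.
Local Open Scope classical_set_scope.
Local Open Scope ring_scope.

(* Since pi^Gamma >= pi, every K^Gamma dominates K.  Conversely, for an
   admissible xi and a rational q, the partition {pi(xi) <= q}, {pi(xi) > q}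
   gives K^Gamma <= pi^Gamma(xi) <= q on {pi(xi) <= q}.  Hence a common lower
   bound of all K^Gamma is, outside a null set depending on q, at most q
   wherever pi(xi) <= q; letting q range over the countably many rationals it
   is at most pi(xi) a.s., hence at most K. *)

Section almost_everywhere.
Context d (T : measurableType d) (R : realType) (mu : {measure set T -> \bar R}).

Lemma ae_forall_countable (I : countType) (Q : I -> T -> Prop) :
  (forall i, {ae mu, forall x, Q i x}) -> {ae mu, forall x, forall i, Q i x}.
Proof.
move=> aeQ.
have : {ae mu, forall x, forall n,
    if unpickle n is Some i then Q i x else True}.
  apply: ae_foralln => n; case: (unpickle n) => [i|]; first exact: aeQ.
  exact: aeW.
by apply: filterS => x Qx i; have := Qx (pickle i); rewrite pickleK.
Qed.

Lemma ae_le_of_rat_bounds (f : T -> R) (Y : T -> \bar R) :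
  (forall q : rat, {ae mu, forall x, f x <= ratr q -> (Y x <= (ratr q)%:E)%E}) ->
  {ae mu, forall x, (Y x <= (f x)%:E)%E}.
Proof.
move=> /ae_forall_countable; apply: filterS => x Yq.
apply/lee_addgt0Pr => e e0.
have [q] : exists q : rat, ratr q \in `](f x), (f x + e)[.
  by apply: rat_in_itvoo; rewrite ltrDl.
rewrite in_itv /= => /andP[fq qe].
by apply: le_trans (Yq q (ltW fq)) _; rewrite lee_fin ltW.
Qed.

End almost_everywhere.

Section esssup_on.
Context d (T : measurableType d) (R : realType) (P : probability T R).

Lemma esssup_onE (A : set T) (f : T -> \bar R) :
  esssup_on P A f = ess_sup P (patch (cst -oo%E) A f).
Proof.
rewrite /esssup_on ess_supEae; congr ereal_inf; apply/seteqP.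
split=> c /=; apply: filterS => x.
  by rewrite /patch; case: ifPn => [/set_mem Ax /(_ Ax)//|_ _]; exact: leNye.
by rewrite /patch => + Ax; rewrite mem_set.
Qed.

Lemma esssup_on_ge (A : set T) (f : T -> \bar R) :
  {ae P, forall x, A x -> (f x <= esssup_on P A f)%E}.
Proof.
rewrite esssup_onE; apply: filterS (ess_sup_ge P (patch (cst -oo%E) A f)).
by move=> x + Ax; rewrite /patch mem_set.
Qed.

End esssup_on.

Section G_partition.
Context d (T : measurableType d) (R : realType) (P : probability T R).
Variable G : set (set T).

Lemma sum_indic_G_partition (Gam : seq (set T)) (g : set T -> \bar R)
    (x : T) (i : nat) :
  G_partition G Gam -> (i < size Gam)%N -> nth set0 Gam i x ->
  (\sum_(A <- Gam) g A * (\1_A x)%:E)%E = g (nth set0 Gam i).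
Proof.
move=> [_ disj _] Hi Hx.
rewrite (big_nth set0) big_mkord (bigD1 (Ordinal Hi)) //= big1 ?adde0.
  by rewrite indicE mem_set // mule1.
move=> j ji; rewrite indicE memNset ?mule0 // => Hjx.
have : (nth set0 Gam j `&` nth set0 Gam i) x by [].
by rewrite disj // (contra_neq val_inj ji).
Qed.

Lemma G_partition_setC (A : set T) :
  is_sub_sigma_algebra G -> G A -> G_partition G [:: A; ~` A].
Proof.
move=> [[_ GC _] _] GA; split.
- by move=> [|[|i]] //= _; rewrite -setTD; exact: GC.
- by move=> [|[|i]] [|[|j]] //= _ _ _; rewrite ?setICr ?setICl.
- by move=> x; have [Ax|nAx] := pselect (A x); [exists 0%N | exists 1%N].
Qed.

Lemma pi_Gamma_ge (pi : (T -> R) -> T -> R) (Gam : seq (set T)) (xi : T -> R) :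
  G_partition G Gam -> {ae P, forall x, ((pi xi x)%:E <= pi_Gamma P pi Gam xi x)%E}.
Proof.
move=> Gam_part; have [_ _ cover] := Gam_part.
have : {ae P, forall x, forall i, nth set0 Gam i x ->
    ((pi xi x)%:E <= esssup_on P (nth set0 Gam i) (fun y => (pi xi y)%:E))%E}.
  by apply: ae_foralln => i; exact: esssup_on_ge.
apply: filterS => x pi_le; have [i Hi Hix] := cover x.
by rewrite /pi_Gamma (sum_indic_G_partition _ Gam_part Hi Hix); exact: pi_le.
Qed.

Lemma pi_Gamma_le_on_block (pi : (T -> R) -> T -> R) (Gam : seq (set T))
    (xi : T -> R) (i : nat) (c : \bar R) (x : T) :
  G_partition G Gam -> (i < size Gam)%N -> nth set0 Gam i x ->
  {ae P, forall y, nth set0 Gam i y -> ((pi xi y)%:E <= c)%E} ->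
  (pi_Gamma P pi Gam xi x <= c)%E.
Proof.
move=> Gam_part Hi Hix le_c.
rewrite /pi_Gamma (sum_indic_G_partition _ Gam_part Hi Hix).
exact: ereal_inf_lbound.
Qed.

End G_partition.

Lemma is_essinf_le d (T : measurableType d) (R : realType) (P : probability T R)
    (S S' : set (T -> \bar R)) (Y Y' : T -> \bar R) :
  is_essinf P S Y -> is_essinf P S' Y' ->
  (forall f', S' f' -> exists2 f, S f & {ae P, forall x, (f x <= f' x)%E}) ->
  {ae P, forall x, (Y x <= Y' x)%E}.
Proof.
move=> [mY Ylb _] [_ _ Y'max] dom; apply: Y'max => // f' /dom[f Sf le_f].
by apply: filterS2 (Ylb f Sf) le_f => x; exact: le_trans.
Qed.

Theorem lemma26 (d : measure_display) (T : measurableType d) (R : realType)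
  (P : probability T R) (G : set (set T)) (LF LG : set (T -> R))
  (pi : (T -> R) -> T -> R) :
  is_sub_sigma_algebra G ->
  ind_vector_lattice P measurable LF ->
  ind_vector_lattice P G LG ->
  (forall X, LF X -> LG (pi X)) ->
  (* pi is well defined on P-a.s. equivalence classes *)
  (forall X Y, LF X -> LF Y -> {ae P, forall x, X x = Y x} ->
     {ae P, forall x, pi X x = pi Y x}) ->
  (* (REG) *)
  (forall A X Y, G A -> LF X -> LF Y ->
     {ae P, forall x,
        pi (fun y => X y * \1_A y + Y y * \1_(~` A) y) x
        = pi X x * \1_A x + pi Y x * \1_(~` A) x}) ->
  forall (X Z : T -> R), LF X -> oc_dual P LF Z -> is_density P Z ->
  forall (KG : seq (set T) -> T -> \bar R),
    (forall Gam, G_partition G Gam ->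
       is_essinf P (KGamma_family P G LF pi Gam X Z) (KG Gam)) ->
  forall K : T -> \bar R,
    is_essinf P (K_family P G LF pi X Z) K ->
    is_essinf P [set KG Gam | Gam in G_partition G] K.
Proof.
(* Only the G-measurability of pi(xi) is needed: the threshold partitions
   already realise the infimum. *)
move=> subG _ [LG_meas _] piLG _ _ X Z _ _ _ KG KG_inf K K_inf.
have [mK _ _] := K_inf; split => //.
- move=> _ [Gam Gam_part <-]; apply: is_essinf_le K_inf (KG_inf _ Gam_part) _.
  move=> _ [xi adm_xi ->]; exists (fun x => (pi xi x)%:E); first by exists xi.
  exact: (pi_Gamma_ge P pi xi Gam_part).
- move=> Y' mY' Y'lb; have [_ _ Kmax] := K_inf; apply: Kmax => // _ [xi adm_xi ->].
  apply: ae_le_of_rat_bounds => q.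
  pose A := [set x | pi xi x <= ratr q].
  have GA : G A.
    have := LG_meas _ (piLG _ adm_xi.1) _ (measurable_itv `]-oo, ratr q]).
    by congr G; apply/seteqP; split => x; rewrite /= in_itv.
  have A_part := G_partition_setC subG GA.
  have [_ KGlb _] := KG_inf _ A_part.
  have := KGlb (pi_Gamma P pi [:: A; ~` A] xi) (ex_intro2 _ _ xi adm_xi erefl).
  apply: filterS2 (Y'lb _ (ex_intro2 _ _ _ A_part erefl)) => x Y'_KG KG_pi Ax.
  apply: le_trans Y'_KG (le_trans KG_pi (pi_Gamma_le_on_block (i := 0) A_part isT Ax _)).
  apply: aeW => y Ay; rewrite lee_fin; exact: Ay.
Qed.
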